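(* Let $S=\{s_1,\dots,s_{k_1}\}$ and $T=\{t_1,\dots,t_{k_2}\}$ be nonempty sets of positive integers and $d=\gcd\{s+t: s\in S,t\in T\}$. For every positive integer $k$ there is an integer $r$ such that for each $j\in[k]$ there are nonnegative integers $a_{i,j}$ ($1\le i\le k_1$) and $b_{i,j}$ ($1\le i\le k_2$) with $$r+jd=\sum_{i=1}^{k_1}a_{i,j}s_i-\sum_{i=1}^{k_2}b_{i,j}t_i,$$ and such that $f(j):=\sum_{i=1}^{k_1}a_{i,j}+\sum_{i=1}^{k_2}b_{i,j}$ is the same for all $j\in[k]$. *)

From mathcomp Require Import all_boot all_order all_algebra.
Set Implicit Arguments. Unset Strict Implicit. Unset Printing Implicit Defensive.
Import Order.TTheory GRing.Theory Num.Theory.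

Definition gcd_sums (k1 k2 : nat) (s : 'I_k1 -> nat) (t : 'I_k2 -> nat) : nat :=
  \big[gcdn/0]_(i < k1) \big[gcdn/0]_(l < k2) (s i + t l).

From mathcomp Require Import all_boot all_order all_algebra ring.
Import Order.TTheory GRing.Theory Num.Theory.
Local Open Scope ring_scope.

(* Bezout gives d = sum_(i,l) c_il (s_i + t_l) = sum_i C_i s_i - sum_l D_l t_l, where
   C_i is the i-th row sum of c and D_l minus its l-th column sum, so sum C + sum D = 0.
   Then a_ij = k|C_i| + j C_i and b_lj = k|D_l| + j D_l are nonnegative for j <= k,
   sum_i a_ij s_i - sum_l b_lj t_l = r + j d with r independent of j, and
   f(j) = k (sum |C| + sum |D|) + j (sum C + sum D) = k (sum |C| + sum |D|). *)

Lemma Bezoutz_big {n} (F : 'I_n -> nat) :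
  exists c : 'I_n -> int, (\big[gcdn/0%N]_(i < n) F i)%:Z = \sum_(i < n) c i * (F i)%:Z.
Proof.
elim: n F => [|n IHn] F; first by exists (fun _ => 0); rewrite !big_ord0.
have [c Hc] := IHn (fun i => F (lift ord0 i)).
have [u [v Huv]] := Bezoutz (F ord0) (\big[gcdn/0%N]_(i < n) F (lift ord0 i)).
exists (fun i => if unlift ord0 i is Some i' then v * c i' else u).
rewrite !big_ord_recl unlift_none.
rewrite -[LHS]/(gcdz (F ord0) (\big[gcdn/0%N]_(i < n) F (lift ord0 i))).
rewrite -Huv Hc mulr_sumr.
by congr (_ + _); apply: eq_bigr => i _; rewrite liftK mulrA.
Qed.

Lemma sum_mulrDr_rows_cols (I J : finType) (c : I -> J -> int) (x : I -> int) (y : J -> int) :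
  \sum_i \sum_j c i j * (x i + y j)
  = \sum_i (\sum_j c i j) * x i + \sum_j (\sum_i c i j) * y j.
Proof.
rewrite (eq_bigr _ (fun i _ => mulr_suml _ _ _ _)).
rewrite [X in _ = _ + X](eq_bigr _ (fun j _ => mulr_suml _ _ _ _)).
rewrite [X in _ = _ + X]exchange_big -big_split /=; apply: eq_bigr => i _.
by rewrite -big_split; apply: eq_bigr => j _; rewrite mulrDr.
Qed.

Lemma gcd_sums_balanced_Bezout {k1 k2} (s : 'I_k1 -> nat) (t : 'I_k2 -> nat) :
  exists (C : 'I_k1 -> int) (D : 'I_k2 -> int),
    (gcd_sums s t)%:Z = \sum_i C i * (s i)%:Z - \sum_l D l * (t l)%:Z
    /\ \sum_i C i + \sum_l D l = 0.
Proof.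
have [cO HO] := Bezoutz_big (fun i => \big[gcdn/0%N]_(l < k2) (s i + t l)).
have [cI HI] := fin_all_exists (fun i => Bezoutz_big (fun l => s i + t l)).
pose c i l := cO i * cI i l.
exists (fun i => \sum_l c i l), (fun l => - \sum_i c i l).
split; last by rewrite sumrN exchange_big subrr.
under [X in _ = _ - X]eq_bigr do rewrite mulNr.
rewrite sumrN opprK /gcd_sums HO -sum_mulrDr_rows_cols; apply: eq_bigr => i _.
by rewrite HI mulr_sumr; apply: eq_bigr => l _; rewrite mulrA PoszD.
Qed.

Definition shift_coef (k j : nat) (x : int) : nat := `|(k%:Z * `|x| + j%:Z * x)%R|%N.

Lemma shift_coefE k j x : (j <= k)%N -> (shift_coef k j x)%:Z = k%:Z * `|x| + j%:Z * x.
Proof.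
move=> le_jk; apply: gez0_abs.
have le_jx : - (j%:Z * `|x|) <= j%:Z * x.
  by rewrite -mulrN ler_wpM2l // lerNl -normrN ler_norm.
have le_jk_x : j%:Z * `|x| <= k%:Z * `|x| by rewrite ler_wpM2r // lez_nat.
by rewrite -(subrr (j%:Z * `|x|)) lerD.
Qed.

Lemma sum_shift_coef (I : finType) (k j : nat) (x : I -> int) (w : I -> nat) :
  (j <= k)%N ->
  \sum_i ((shift_coef k j (x i) * w i)%N)%:Z
  = k%:Z * \sum_i `|x i| * (w i)%:Z + j%:Z * \sum_i x i * (w i)%:Z.
Proof.
move=> le_jk; rewrite !mulr_sumr -big_split; apply: eq_bigr => i _ /=.
by rewrite PoszM shift_coefE //; ring.
Qed.

Lemma sum_shift_coef1 (I : finType) (k j : nat) (x : I -> int) :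
  (j <= k)%N ->
  (\sum_i shift_coef k j (x i))%N%:Z = k%:Z * \sum_i `|x i| + j%:Z * \sum_i x i.
Proof.
move=> le_jk; rewrite (big_morph Posz PoszD erefl).
under eq_bigr do rewrite -[shift_coef _ _ _]muln1.
rewrite sum_shift_coef //.
by congr (_ * _ + _ * _); apply: eq_bigr => i _; rewrite mulr1.
Qed.

Theorem theorem4p2 (k1 k2 : nat) (s : 'I_k1 -> nat) (t : 'I_k2 -> nat) :
  (0 < k1)%N -> (0 < k2)%N ->
  injective s -> injective t ->
  (forall i, (0 < s i)%N) -> (forall i, (0 < t i)%N) ->
  forall k : nat, (0 < k)%N ->
  exists r : int, exists (a : 'I_k1 -> nat -> nat) (b : 'I_k2 -> nat -> nat),
    (forall j : nat, (1 <= j <= k)%N ->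
       r + (j * gcd_sums s t)%:Z
       = (\sum_(i < k1) (a i j * s i)%:Z) - (\sum_(i < k2) (b i j * t i)%:Z))
    /\ (forall j j' : nat, (1 <= j <= k)%N -> (1 <= j' <= k)%N ->
       (\sum_(i < k1) a i j + \sum_(i < k2) b i j
        = \sum_(i < k1) a i j' + \sum_(i < k2) b i j')%N).
Proof.
move=> _ _ _ _ _ _ k _.
have [C [D [dE sumCD]]] := gcd_sums_balanced_Bezout s t.
pose a i j := shift_coef k j (C i).
pose b l j := shift_coef k j (D l).
exists (k%:Z * \sum_i `|C i| * (s i)%:Z - k%:Z * \sum_l `|D l| * (t l)%:Z), a, b; split.
  move=> j /andP[_ le_jk].
  by rewrite !sum_shift_coef // PoszM dE; ring.
have fE j : (j <= k)%N ->
    (\sum_i a i j + \sum_l b l j)%N%:Z = k%:Z * (\sum_i `|C i| + \sum_l `|D l|).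
  move=> le_jk; rewrite PoszD !sum_shift_coef1 //.
  transitivity (k%:Z * (\sum_i `|C i| + \sum_l `|D l|) + j%:Z * (\sum_i C i + \sum_l D l)).
    by ring.
  by rewrite sumCD mulr0 addr0.
move=> j j' /andP[_ le_jk] /andP[_ le_j'k].
by apply/eqP; rewrite -eqz_nat !fE.
Qed.
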